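(* Let $\Omega$ be a compact metric space, $\varphi:\Omega\to\Omega$ continuous, and let $\{V_n\}\subset\mathcal{L}(X^* )$ be an ergodic operator sequence converging in the $\mathrm{W^*O}$-topology to an operator $Q$. Then for every $\varphi$-ergodic Borel probability measure $\mu$ on $\Omega$ there exists $\omega\in\Omega$ with $Q\delta_\omega=\mu$, i.e. $V_n\delta_\omega\to\mu$ weak-star.
   Context: $X=C(\Omega)$, $X^*$ the space of Radon measures, pairing $(x,\mu)$; $Ux=x\circ\varphi$, $V=U^*$. $\mathrm{W^*O}$-convergence $T_n\to T$ means $(x,T_n\mu)\to(x,T\mu)$ for all $x\in X,\mu\in X^*$. A sequence $\{V_n\}\subseteq\operatorname{co}\{V^k:k\in\mathbb{N}_0\}$ is ergodic if $(x,(\operatorname{Id}-V)V_n\mu)\to0$ for all $x\in X,\mu\in X^*$. $\delta_\omega$ denotes the Dirac measure at $\omega$. *)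

From mathcomp Require Import all_boot all_order all_algebra.
From mathcomp Require Import all_classical all_reals all_analysis.
Set Implicit Arguments. Unset Strict Implicit. Unset Printing Implicit Defensive.
Import Order.TTheory GRing.Theory Num.Theory numFieldNormedType.Exports.
Local Open Scope classical_set_scope.
Local Open Scope ring_scope.

Section Defs.
Variables (R : realType) (T : pseudoPMetricType R).

Definition borel := g_sigma_algebraType (@open T).

(* X = C(Omega) (real valued); an element x : T -> R is in X iff continuous x.
   Xstar = the (topological) dual of C(Omega), i.e. bounded linear functionals on
   C(Omega) (= Radon measures by Riesz).  A functional nu : (T -> R) -> R
   represents an element of Xstar if it is linear and bounded on C(Omega);
   its values off C(Omega) are irrelevant. *)
Definition in_dual (nu : (T -> R) -> R) : Prop :=
  (forall x y : T -> R, continuous x -> continuous y -> nu (x \+ y) = nu x + nu y) /\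
  (forall (a : R) (x : T -> R), continuous x -> nu (fun t => a * x t) = a * nu x) /\
  (exists M : R, forall (x : T -> R) (c : R), continuous x ->
      (forall t, `|x t| <= c) -> `|nu x| <= M * c).

Definition in_LXstar (Q : ((T -> R) -> R) -> ((T -> R) -> R)) : Prop :=
  (forall nu, in_dual nu -> in_dual (Q nu)) /\
  (forall nu1 nu2 x, in_dual nu1 -> in_dual nu2 -> continuous x ->
      Q (fun y => nu1 y + nu2 y) x = Q nu1 x + Q nu2 x) /\
  (forall (a : R) nu x, in_dual nu -> continuous x ->
      Q (fun y => a * nu y) x = a * Q nu x) /\
  (exists M : R, forall nu (d c : R) x, in_dual nu ->
      (forall y : T -> R, continuous y -> (forall t, `|y t| <= 1) -> `|nu y| <= d) ->
      continuous x -> (forall t, `|x t| <= c) -> `|Q nu x| <= M * d * c).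

(* V = U^*, with U x = x \o phi; so (x, V^k nu) = nu (x \o phi^k). *)
Definition Vpow (phi : T -> T) (k : nat) (nu : (T -> R) -> R) : (T -> R) -> R :=
  fun x => nu (x \o iter k phi).

(* An element of co{V^k : k in N_0} is a finite convex combination
   sum_k w_k V^k, given by its weight list w (w_k >= 0, sum w_k = 1). *)
Definition convex_weights (w : seq R) : Prop :=
  (forall k, (k < size w)%N -> 0 <= w`_k) /\ \sum_(k < size w) w`_k = 1.

Definition convop (phi : T -> T) (w : seq R) (nu : (T -> R) -> R) : (T -> R) -> R :=
  fun x => \sum_(k < size w) w`_k * Vpow phi k nu x.

Definition ergodic_seq (phi : T -> T) (w : nat -> seq R) : Prop :=
  (forall n, convex_weights (w n)) /\
  forall (x : T -> R) nu, continuous x -> in_dual nu ->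
    (fun n => convop phi (w n) nu x - Vpow phi 1 (convop phi (w n) nu) x) @ \oo --> 0.

Definition WstarO_cvg (phi : T -> T) (w : nat -> seq R)
    (Q : ((T -> R) -> R) -> ((T -> R) -> R)) : Prop :=
  forall (x : T -> R) nu, continuous x -> in_dual nu ->
    (fun n => convop phi (w n) nu x) @ \oo --> Q nu x.

Definition dirac_fun (om : T) : (T -> R) -> R := fun x => x om.

Definition phi_ergodic (phi : T -> T) (mu : probability borel R) : Prop :=
  (forall A : set borel, measurable A -> mu (phi @^-1` A) = mu A) /\
  (forall A : set borel, measurable A -> phi @^-1` A = A ->
     mu A = 0%E \/ mu A = 1%E).

End Defs.

From mathcomp Require Import all_boot all_order all_algebra.
From mathcomp Require Import all_classical all_reals all_analysis.
From mathcomp Require Import lra measurable_realfun.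
Set Implicit Arguments. Unset Strict Implicit. Unset Printing Implicit Defensive.
Import Order.TTheory GRing.Theory Num.Theory numFieldNormedType.Exports.
Local Open Scope classical_set_scope.
Local Open Scope ring_scope.

(** The value (x, Q δ_ω) is the limit of the orbit means Σ_k w_k x(φ^k ω), hence a Borel
    function of ω, and the ergodicity of {V_n} makes it φ-invariant.  Dominated convergence
    and the φ-invariance of μ show that its μ-mean is ∫ x dμ, so by ergodicity of μ it equals
    ∫ x dμ for μ-almost every ω.  A bounded linear functional on C(Ω) is determined by its
    values on the constants and on countably many Urysohn functions built from a countable
    base of Ω (their affine combinations are uniformly dense), so one ω outside countably
    many null sets works for every x. *)

Lemma staircase_approx (R : realFieldType) (z e : R) (u : nat -> R) (N : nat) :
  0 < e -> 0 <= z <= N%:R * e -> (forall j, 0 <= u j <= 1) ->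
  (forall j, j.+1%:R * e <= z -> u j = 1) -> (forall j, z <= j%:R * e -> u j = 0) ->
  `|z - \sum_(j < N) e * u j| <= e.
Proof.
move=> e_gt0 /andP[z_ge0 zN] u01 u1 u0.
suff [[Sz SN] S_ge] : (\sum_(j < N) e * u j <= z + e /\
    \sum_(j < N) e * u j <= N%:R * e) /\
    (z - e <= \sum_(j < N) e * u j \/ N%:R * e <= \sum_(j < N) e * u j).
  by apply/ler_normlP; case: S_ge; split; lra.
elim: N {zN} => [|N [[Sz SN] S_ge]].
  by rewrite big_ord0 mul0r; split; [split|right]; lra.
rewrite big_ord_recr /= -natr1 mulrDl mul1r.
move: Sz SN S_ge; set S := \sum_(i < N) _; set Ne := N%:R * e => Sz SN S_ge.
have /andP[uN_ge0 uN_le1] := u01 N.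
have euN_ge0 : 0 <= e * u N by rewrite mulr_ge0 // ltW.
have euN_le : e * u N <= e by rewrite ler_piMr // ltW.
have [Nez|zNe] := leP (Ne + e) z.
  rewrite u1 ?mulr1; last by rewrite -natr1 mulrDl mul1r.
  by split; [split|case: S_ge => ?; [left|right]]; lra.
have [zN|Nz] := leP z Ne.
  by rewrite u0 // mulr0 addr0; split; [split|left; case: S_ge]; lra.
by split; [split|left; case: S_ge]; lra.
Qed.

Section continuous_functions.
Context (R : realType) (T : topologicalType).

Lemma continuous_sum (I : Type) (r : seq I) (f : I -> T -> R) :
  (forall i, continuous (f i)) -> continuous (fun t => \sum_(i <- r) f i t).
Proof. by move=> f_cont; apply: continuous_big => //; exact: add_continuous. Qed.

Lemma continuousMl (c : R) (f : T -> R) : continuous f -> continuous (fun t => c * f t).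
Proof.
by move=> f_cont t; exact: (@continuousM _ _ (fun=> c) f t (@cst_continuous _ _ c t) (f_cont t)).
Qed.

Lemma compact_continuous_bounded (f : T -> R) : compact [set: T] -> continuous f ->
  exists K, forall t, `|f t| <= K.
Proof.
move=> T_compact f_cont.
have /compact_bounded[M [_ HM]] : compact (f @` [set: T]).
  by apply: continuous_compact => //; exact: continuous_subspaceT.
exists (`|M| + 1) => t; apply: HM; last by exists t.
by rewrite (le_lt_trans (ler_norm M)) // ltrDl.
Qed.

End continuous_functions.

Section dual.
Context (R : realType) (T : pseudoPMetricType R) (nu : (T -> R) -> R).
Hypothesis nu_dual : in_dual nu.

Lemma in_dual_bounded : exists2 M, 0 <= M &
  forall x c, continuous x -> (forall t, `|x t| <= c) -> `|nu x| <= M * c.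
Proof.
have [_ [_ [M nu_le]]] := nu_dual; exists M => //.
have := nu_le (fun=> 0) 1 (@cst_continuous _ _ 0).
by rewrite normr0 mulr1 => /(_ (fun=> ler01)); apply: le_trans.
Qed.

Lemma in_dual0 : nu (cst 0) = 0.
Proof.
have [_ [nuZ _]] := nu_dual.
transitivity (nu (fun t => 0 * 0)); first by congr nu; apply: funext => t; rewrite mul0r.
by rewrite (nuZ 0 (fun=> 0)) ?mul0r //; exact: cst_continuous.
Qed.

Lemma in_dual_sum (I : Type) (r : seq I) (f : I -> T -> R) : (forall i, continuous (f i)) ->
  nu (fun t => \sum_(i <- r) f i t) = \sum_(i <- r) nu (f i).
Proof.
move=> f_cont; have [nuD _] := nu_dual.
elim: r => [|i r IHr].
  rewrite big_nil; transitivity (nu (fun=> 0)); last exact: in_dual0.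
  by congr nu; apply: funext => t; rewrite big_nil.
rewrite big_cons -IHr -nuD //; last exact: continuous_sum.
by congr nu; apply: funext => t; rewrite big_cons.
Qed.

Lemma in_dual_affine (K e : R) (N : nat) (f : nat -> T -> R) : (forall j, continuous (f j)) ->
  nu (fun t => K + \sum_(j < N) e * f j t) = nu (cst K) + \sum_(j < N) e * nu (f j).
Proof.
move=> f_cont; have [nuD [nuZ _]] := nu_dual.
have ef_cont j : continuous (fun t => e * f j t) by exact: continuousMl.
rewrite (nuD (cst K) (fun t => \sum_(j < N) e * f j t)); last 2 first.
- exact: cst_continuous.
- exact: continuous_sum.
by rewrite in_dual_sum //; congr (_ + _); apply: eq_bigr => j _; exact: nuZ.
Qed.

End dual.

Lemma in_dual_eq_approx (R : realType) (T : pseudoPMetricType R) (nu1 nu2 : (T -> R) -> R)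
    (x : T -> R) : in_dual nu1 -> in_dual nu2 -> continuous x ->
  (forall e, 0 < e -> exists2 y, continuous y & (forall t, `|x t - y t| <= e) /\ nu1 y = nu2 y) ->
  nu1 x = nu2 x.
Proof.
move=> nu1_dual nu2_dual x_cont x_approx.
have [M1 M1_ge0 nu1_le] := in_dual_bounded nu1_dual.
have [M2 M2_ge0 nu2_le] := in_dual_bounded nu2_dual.
apply/eqP; rewrite -subr_eq0 -normr_le0; apply/ler_addgt0Pr => d d_gt0; rewrite add0r.
have M_gt0 : 0 < M1 + M2 + 1 by lra.
set e := d / (M1 + M2 + 1); have e_gt0 : 0 < e by exact: divr_gt0.
have [y y_cont [xy_le nu12_y]] := x_approx e e_gt0.
have xy_cont : continuous (fun t => x t - y t).
  by move=> t; apply: continuousB; [exact: x_cont|exact: y_cont].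
have nu_split nu : in_dual nu -> nu x = nu (fun t => x t - y t) + nu y.
  by move=> nu_dual; rewrite -nu_dual.1 //; congr nu; apply: funext => t /=; rewrite subrK.
rewrite (nu_split nu1) // (nu_split nu2) // nu12_y opprD addrACA subrr addr0.
apply: le_trans (ler_normB _ _) _.
apply: le_trans (lerD (nu1_le _ _ xy_cont xy_le) (nu2_le _ _ xy_cont xy_le)) _.
rewrite [leRHS](_ : d = (M1 + M2 + 1) * e); last by rewrite mulrC divfK ?gt_eqF.
by rewrite -mulrDl ler_pM2r // lerDl.
Qed.

Lemma in_dual_dirac (R : realType) (T : pseudoPMetricType R) (om : T) :
  in_dual (dirac_fun om).
Proof. by split; [|split]; last by exists 1 => x c _ /(_ om); rewrite mul1r. Qed.

Section urysohn_family.
Context (R : realType) (T : pseudoPMetricType R).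
Hypothesis T_compact : compact [set: T].
Variable b : nat -> set T.
Hypothesis b_open : forall n, open (b n).
Hypothesis b_base : forall t (O : set T), open O -> O t -> exists n, b n t /\ b n `<=` O.

Definition base_union (s : seq nat) : set T := \bigcup_(i in [set i | i \in s]) b i.

Lemma open_base_union s : open (base_union s).
Proof. by apply: bigcup_open => i _; exact: b_open. Qed.

Lemma closed_sub_base_union (C O : set T) : closed C -> open O -> C `<=` O ->
  exists s, C `<=` base_union s /\ base_union s `<=` O.
Proof.
move=> C_closed O_open CO.
have := subclosed_compact C_closed T_compact (subsetT C).
rewrite compact_cover => /(_ nat [set n | b n `<=` O] b) [].
- by move=> n _; exact: b_open.
- by move=> t Ct; have [n [bnt bnO]] := b_base O_open (CO _ Ct); exists n.
move=> D DO CD; exists (finmap.enum_fset D); split.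
  by move=> t /CD [i iD bit]; exists i.
by move=> t [i iD bit]; move: (DO _ iD); rewrite inE; apply.
Qed.

Definition base_urysohn (p : seq nat * seq nat) : T -> R :=
  Urysohn (~` base_union p.2) (closure (base_union p.1)).

Lemma continuous_base_urysohn p : continuous (base_urysohn p).
Proof. exact: Urysohn_continuous. Qed.

Lemma base_urysohn_ge0_le1 p t : 0 <= base_urysohn p t <= 1.
Proof.
have /(@Urysohn_range T R) : range (base_urysohn p) (base_urysohn p t) by exists t.
by rewrite /= in_itv.
Qed.

Lemma base_urysohn_sep p : closure (base_union p.1) `<=` base_union p.2 ->
  (forall t, base_union p.1 t -> base_urysohn p t = 1) /\
  (forall t, ~ base_union p.2 t -> base_urysohn p t = 0).
Proof.
move=> sub.
have sep : uniform_separator (~` base_union p.2) (closure (base_union p.1)).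
  apply: (proj1 (@normal_separatorP R T) (@pseudometric_normal R T)).
  - exact/open_closedC/open_base_union.
  - exact: closed_closure.
  - by apply/seteqP; split => // t [/= ? /sub].
split => t Ht.
  by apply: (Urysohn_sub1 sep); exists t => //; exact: subset_closure.
by apply: (Urysohn_sub0 sep); exists t.
Qed.

Lemma base_urysohn_step (x : T -> R) (a e : R) : continuous x -> 0 < e ->
  exists p, forall t, (a + e <= x t -> base_urysohn p t = 1) /\
                      (x t <= a -> base_urysohn p t = 0).
Proof.
move=> x_cont e_gt0.
have closed_ge c : closed [set t | c <= x t].
  by move: (proj1 (continuous_closedP x) x_cont _ (@closed_ge _ c)).
have open_gt c : open [set t | c < x t].
  rewrite (_ : [set t | c < x t] = x @^-1` `]c, +oo[); last first.
    by apply/seteqP; split => t /=; rewrite in_itv /= andbT.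
  by apply: open_comp => [t _|]; [exact: x_cont|exact: interval_open].
have [s1 [ge_s1 s1_gt]] : exists s, [set t | a + e <= x t] `<=` base_union s /\
    base_union s `<=` [set t | a + e / 2 < x t].
  apply: closed_sub_base_union => // t /=; apply: lt_le_trans.
  by rewrite ltrD2l ltr_pdivrMr // ltr_pMr // ltr1n.
have [s2 [ge_s2 s2_gt]] : exists s, [set t | a + e / 2 <= x t] `<=` base_union s /\
    base_union s `<=` [set t | a < x t].
  by apply: closed_sub_base_union => // t /=; apply: lt_le_trans; rewrite ltrDl divr_gt0.
have sub : closure (base_union (s1, s2).1) `<=` base_union (s1, s2).2.
  apply: subset_trans ge_s2; rewrite [X in _ `<=` X](closure_id _).1 //.
  by apply: closureS => t /s1_gt /ltW.
have [one zero] := base_urysohn_sep sub.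
exists (s1, s2) => t; split => [/ge_s1|xa]; first exact: one.
by apply: zero => /s2_gt /=; rewrite ltNge xa.
Qed.

Lemma base_urysohn_approx (x : T -> R) (e : R) : continuous x -> 0 < e ->
  exists (K : R) (N : nat) (ps : nat -> seq nat * seq nat),
    forall t, `|x t - (K + \sum_(j < N) e * base_urysohn (ps j) t)| <= e.
Proof.
move=> x_cont e_gt0.
have [K x_le] := compact_continuous_bounded T_compact x_cont.
pose N := (Num.truncn (2 * K / e)).+1.
have KN : 2 * K < N%:R * e by rewrite -ltr_pdivrMr // archimedean.Num.Theory.truncnS_gt.
have /choice[ps ps_step] : forall j : nat, exists p, forall t,
    (- K + j%:R * e + e <= x t -> base_urysohn p t = 1) /\
    (x t <= - K + j%:R * e -> base_urysohn p t = 0) by move=> j; exact: base_urysohn_step.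
exists (- K), N, ps => t.
have /ler_normlP[xK Kx] := x_le t.
rewrite opprD addrA opprK -[x t + K](addrC K).
apply: (staircase_approx (u := fun j => base_urysohn (ps j) t)) => //.
- by apply/andP; split; lra.
- by move=> j; exact: base_urysohn_ge0_le1.
- by move=> j jx; apply: (ps_step j t).1; move: jx; rewrite -natr1 mulrDl mul1r; lra.
- by move=> j xj; apply: (ps_step j t).2; lra.
Qed.

Lemma in_dual_eq_base_urysohn (nu1 nu2 : (T -> R) -> R) : in_dual nu1 -> in_dual nu2 ->
  (forall c, nu1 (cst c) = nu2 (cst c)) ->
  (forall p, nu1 (base_urysohn p) = nu2 (base_urysohn p)) ->
  forall x, continuous x -> nu1 x = nu2 x.
Proof.
move=> nu1_dual nu2_dual eq_cst eq_urysohn x x_cont.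
apply: in_dual_eq_approx => // e e_gt0.
have [K [N [ps x_approx]]] := base_urysohn_approx x_cont e_gt0.
have urysohn_cont j : continuous (base_urysohn (ps j)) by exact: continuous_base_urysohn.
exists (fun t => K + \sum_(j < N) e * base_urysohn (ps j) t).
  move=> t; apply: continuousD; first exact: cst_continuous.
  by apply: continuous_sum => j; exact: continuousMl.
split=> //; rewrite (in_dual_affine nu1_dual K e N urysohn_cont).
rewrite (in_dual_affine nu2_dual K e N urysohn_cont) eq_cst.
by under eq_bigr do rewrite eq_urysohn.
Qed.

End urysohn_family.

Lemma compact_nat_base (R : realType) (T : pseudoPMetricType R) : compact [set: T] ->
  exists b : nat -> set T, (forall n, open (b n)) /\
    forall t (O : set T), open O -> O t -> exists n, b n t /\ b n `<=` O.
Proof.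
move=> T_compact; have [B /countable_injP[f f_inj] [B_open B_base]] :=
  compact_second_countable T_compact.
exists (fun n => \bigcup_(U in [set U | B U /\ f U = n]) U); split.
  by move=> n; apply: bigcup_open => U [BU _]; exact: B_open.
move=> t O O_open Ot.
have /B_base[U [BU Ut] UO] : nbhs t O by exact: open_nbhs_nbhs.
exists (f U); split; first by exists U.
move=> s [V [BV fV] Vs]; apply: UO.
by rewrite (f_inj U V) ?inE.
Qed.

Lemma countable_in_dual_determining (R : realType) (T : pseudoPMetricType R) :
  compact [set: T] -> exists g : nat -> T -> R, (forall n, continuous (g n)) /\
  forall nu1 nu2, in_dual nu1 -> in_dual nu2 -> (forall c, nu1 (cst c) = nu2 (cst c)) ->
    (forall n, nu1 (g n) = nu2 (g n)) -> forall x, continuous x -> nu1 x = nu2 x.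
Proof.
move=> T_compact; have [b [b_open b_base]] := compact_nat_base T_compact.
pose g n : T -> R := if unpickle n is Some p then base_urysohn b p else cst 0.
exists g; split.
  move=> n; rewrite /g; case: (unpickle n) => [p|]; last exact: cst_continuous.
  exact: continuous_base_urysohn.
move=> nu1 nu2 nu1_dual nu2_dual eq_cst eq_g.
apply: in_dual_eq_base_urysohn => // p.
by have := eq_g (pickle p); rewrite /g pickleK.
Qed.

Section measure_facts.
Context d (X : measurableType d) (R : realType).

Lemma gt0_Rintegral_eq0_null (P : measure X R) (A : set X) (f : X -> R) :
  measurable A -> P.-integrable A (EFin \o f) -> (forall x, A x -> 0 < f x) ->
  \int[P]_(x in A) f x = 0 -> P A = 0%E.
Proof.
move=> mA fi f_gt0 f0.
have : (\int[P]_(x in A) `|(f x)%:E|)%E = 0%E.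
  rewrite -[RHS]/(0%:E) -f0 /Rintegral fineK; last exact: integrable_fin_num.
  by apply: eq_integral => x /set_mem Ax /=; rewrite gtr0_norm ?f_gt0.
move=> /(ae_eq_integral_abs P mA (measurable_int _ fi)) [N [mN N0 AN]].
apply: subset_measure0 mA mN _ N0 => x Ax; apply: AN => /(_ Ax) /=.
by move/eqP; rewrite eqe gt_eqF ?f_gt0.
Qed.

Lemma exists_notin_negligible (P : probability X R) (N : set X) :
  P.-negligible N -> exists x, ~ N x.
Proof.
move=> [M [mM M0 NM]]; apply/existsNP => allN.
have MT : M = [set: X] by apply/seteqP; split => // x _; exact/NM/allN.
by move: M0; rewrite MT probability_setT => /eqP; rewrite onee_eq0.
Qed.

Lemma Rintegral_cst_prob (P : probability X R) (c : R) : \int[P]_x c = c.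
Proof. by rewrite Rintegral_cst // (congr1 fine (probability_setT P)) mulr1. Qed.

Lemma bounded_integrable (P : probability X R) (f : X -> R) : measurable_fun setT f ->
  (exists K, forall x, `|f x| <= K) -> P.-integrable setT (EFin \o f).
Proof.
move=> mf [K f_le]; apply: measurable_bounded_integrable => //.
  by have /= -> := probability_setT P; rewrite ltry.
exists K; split; first by rewrite num_real.
by move=> k Kk x _; apply: le_trans (f_le x) _; exact: ltW.
Qed.

Lemma Rintegral_sum (P : measure X R) (D : set X) (I : Type) (r : seq I) (f : I -> X -> R) :
  measurable D -> (forall i, P.-integrable D (EFin \o f i)) ->
  \int[P]_(x in D) \sum_(i <- r) f i x = \sum_(i <- r) \int[P]_(x in D) f i x.
Proof.
move=> mD fi; rewrite /Rintegral.
under eq_integral do rewrite -sumEFin.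
rewrite integral_sum //.
under eq_bigr do rewrite -(fineK (integrable_fin_num mD (fi _))).
by rewrite sumEFin.
Qed.

Lemma Rintegral_comp_preserving (P : measure X R) (psi : X -> X) (f : X -> R) :
  measurable_fun setT psi -> (forall A, measurable A -> P (psi @^-1` A) = P A) ->
  measurable_fun setT f -> P.-integrable setT (EFin \o (f \o psi)) ->
  \int[P]_x f (psi x) = \int[P]_x f x.
Proof.
move=> mpsi P_psi mf fi; rewrite /Rintegral; congr fine.
have mEf : measurable_fun setT (EFin \o f) by exact: measurableT_comp.
rewrite -(preimage_setT psi) in fi.
have := integral_pushforward mpsi mEf fi measurableT; rewrite preimage_setT => <-.
by apply: eq_measure_integral => A mA _; exact: P_psi.
Qed.

Section measure_preserving.
Context (P : measure X R) (phi : X -> X).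
Hypotheses (phi_meas : measurable_fun setT phi)
  (P_phi : forall A, measurable A -> P (phi @^-1` A) = P A).

Lemma measurable_iter k : measurable_fun setT (iter k phi).
Proof. by elim: k => [|k IHk] /=; [exact: measurable_id|exact: measurableT_comp]. Qed.

Lemma measure_preimage_iter k A : measurable A -> P (iter k phi @^-1` A) = P A.
Proof.
elim: k A => [//|k IHk] A mA.
have mphiA : measurable (phi @^-1` A) by rewrite -[_ @^-1` _]setTI; exact: phi_meas.
exact: etrans (IHk _ mphiA) (P_phi mA).
Qed.

End measure_preserving.

Section ergodic.
Context (P : probability X R) (phi : X -> X).
Hypothesis P_ergodic :
  forall A, measurable A -> phi @^-1` A = A -> P A = 0%E \/ P A = 1%E.

Lemma invariant_gt_mean_negligible (G : X -> R) : measurable_fun setT G ->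
  P.-integrable setT (EFin \o G) -> (forall x, G (phi x) = G x) ->
  P.-negligible [set x | \int[P]_y G y < G x].
Proof.
move=> mG iG G_phi; set a := \int[P]_y G y; set A := [set x | a < G x].
have mA : measurable A.
  rewrite (_ : A = G @^-1` `]a, +oo[); last first.
    by apply/seteqP; split => x /=; rewrite in_itv /= andbT.
  by rewrite -[_ @^-1` _]setTI; apply: mG => //; exact: measurable_itv.
apply/negligibleP => //.
have A_inv : phi @^-1` A = A by apply/seteqP; split => x; rewrite /A /= G_phi.
(* If [A] had full measure, [G - a], positive on [A], would have integral 0 over [A]. *)
case: (P_ergodic mA A_inv) => // A1; exfalso.
have AC0 : P (~` A) = 0%E by rewrite probability_setC // A1 subee.
pose g x := G x - a.
have ig : P.-integrable setT (EFin \o g).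
  rewrite (_ : EFin \o g = (fun x => (EFin \o G) x - (EFin \o cst a) x)%E) //.
  by apply: (integrableB measurableT iG); exact: finite_measure_integrable_cst.
have g0 : \int[P]_x g x = 0.
  rewrite RintegralB //; last exact: finite_measure_integrable_cst.
  by rewrite Rintegral_cst_prob subrr.
have gA0 : \int[P]_(x in A) g x = 0.
  rewrite -g0 /Rintegral (negligible_integral _ _ ig AC0) ?setTD ?setCK //.
  exact: measurableC.
have A0 : P A = 0%E.
  apply: gt0_Rintegral_eq0_null mA (integrableS measurableT mA (subsetT _) ig) _ gA0.
  by move=> x; rewrite subr_gt0.
by move: A1; rewrite A0 => /eqP; rewrite eq_sym onee_eq0.
Qed.

Lemma invariant_ae_mean (G : X -> R) : measurable_fun setT G ->
  P.-integrable setT (EFin \o G) -> (forall x, G (phi x) = G x) ->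
  P.-negligible [set x | G x != \int[P]_y G y].
Proof.
move=> mG iG G_phi.
have int_opp : \int[P]_y (- G y) = - \int[P]_y G y.
  transitivity (\int[P]_y (0 - G y)); first by apply: eq_Rintegral => y _; rewrite sub0r.
  rewrite RintegralB //; last exact: finite_measure_integrable_cst.
  by rewrite Rintegral_cst // mul0r sub0r.
have := invariant_gt_mean_negligible (measurable_funN mG) (integrableN iG) _.
rewrite int_opp => /(_ (fun x => congr1 -%R (G_phi x))) /(negligibleU
  (invariant_gt_mean_negligible mG iG G_phi)); apply: negligibleS => x /=.
by rewrite neq_lt ltrN2 => /orP[]; [right|left].
Qed.

End ergodic.

End measure_facts.

Section borel.
Context (R : realType) (T : pseudoPMetricType R).
Local Notation B := (borel T).

Lemma continuous_borel_measurable (x : T -> R) : continuous x ->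
  measurable_fun [set: B] (x : B -> R).
Proof.
move=> x_cont; apply: (measurability _ (RGenOpens.measurableE R)).
move=> _ [_ [a [b ->] <-]]; rewrite setTI; apply: sub_sigma_algebra.
by apply: open_comp; [move=> t _; exact: x_cont|exact: interval_open].
Qed.

Lemma continuous_borel_measurable_map (f : T -> T) : continuous f ->
  measurable_fun [set: B] (f : B -> B).
Proof.
move=> f_cont; apply: (@measurability _ _ B B [set: B] f (@open T)) => //.
move=> _ [U U_open <-]; rewrite setTI; apply: sub_sigma_algebra.
by apply: open_comp => // t _; exact: f_cont.
Qed.

Hypothesis T_compact : compact [set: T].
Variable P : probability B R.

Lemma continuous_integrable (x : T -> R) : continuous x ->
  P.-integrable [set: B] (EFin \o x).
Proof.
move=> x_cont; apply: bounded_integrable; first exact: continuous_borel_measurable.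
exact: compact_continuous_bounded.
Qed.

Lemma in_dual_Rintegral : in_dual (fun x : T -> R => \int[P]_t x t).
Proof.
split=> [x y x_cont y_cont|]; first by rewrite RintegralD //; exact: continuous_integrable.
split=> [a x x_cont|]; first by rewrite RintegralZl //; exact: continuous_integrable.
exists 1 => x c x_cont x_le; rewrite mul1r.
have ix := continuous_integrable x_cont.
have ic k : P.-integrable [set: B] (EFin \o cst k) by exact: finite_measure_integrable_cst.
apply/ler_normlP; split.
- rewrite lerNl -[leLHS](Rintegral_cst_prob P (- c)).
  apply: (le_Rintegral measurableT (ic (- c)) ix) => t _.
  by have /ler_normlP[] := x_le t; rewrite lerNl.
- rewrite -[leRHS](Rintegral_cst_prob P c).
  apply: (le_Rintegral measurableT ix (ic c)) => t _.
  by have /ler_normlP[] := x_le t.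
Qed.

End borel.

Section orbit_mean.
Context (R : realType) (T : pseudoPMetricType R) (phi : T -> T).

Definition orbit_mean (w : seq R) (x : T -> R) (om : T) : R :=
  \sum_(k < size w) w`_k * x (iter k phi om).

Lemma convop_dirac w x om : convop phi w (dirac_fun om) x = orbit_mean w x om.
Proof. by []. Qed.

Lemma continuous_iter k : continuous phi -> continuous (iter k phi).
Proof.
move=> phi_cont; elim: k => [|k IHk] t /=; first exact: cvg_id.
exact: (@continuous_comp _ _ _ (iter k phi) phi t (IHk t) (phi_cont _)).
Qed.

Lemma continuous_comp_iter k (x : T -> R) : continuous phi -> continuous x ->
  continuous (x \o iter k phi).
Proof.
move=> phi_cont x_cont t; apply: (continuous_comp (f := iter k phi) (g := x)).
  exact: continuous_iter.
exact: x_cont.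
Qed.

Lemma continuous_orbit_mean w x : continuous phi -> continuous x ->
  continuous (orbit_mean w x).
Proof.
move=> phi_cont x_cont; apply: continuous_sum => k; apply: continuousMl.
exact: continuous_comp_iter.
Qed.

Variable w : seq R.
Hypothesis w_convex : convex_weights w.

Lemma orbit_mean_cst c om : orbit_mean w (cst c) om = c.
Proof. by rewrite /orbit_mean -big_distrl /= w_convex.2 mul1r. Qed.

Lemma norm_orbit_mean_le x K om : (forall t, `|x t| <= K) -> `|orbit_mean w x om| <= K.
Proof.
move=> x_le; have [w_ge0 w_sum1] := w_convex.
apply: le_trans (ler_norm_sum _ _ _) _.
rewrite -[leRHS]mul1r -w_sum1 big_distrl /=; apply: ler_sum => k _.
by rewrite normrM ger0_norm ?w_ge0 // ler_wpM2l ?w_ge0.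
Qed.

Lemma orbit_mean_phi x om :
  orbit_mean w x (phi om) = Vpow phi 1 (convop phi w (dirac_fun om)) x.
Proof. by apply: eq_bigr => k _; rewrite /= -iterSr iterS. Qed.

End orbit_mean.

Section limit_functional.
Context (R : realType) (T : pseudoPMetricType R) (phi : T -> T) (w : nat -> seq R)
  (Q : ((T -> R) -> R) -> ((T -> R) -> R)).
Hypotheses (phi_cont : continuous phi) (w_erg : ergodic_seq phi w)
  (Q_lim : WstarO_cvg phi w Q).
Local Notation B := (borel T).

Lemma orbit_mean_cvg x om : continuous x ->
  orbit_mean phi (w n) x om @[n --> \oo] --> Q (dirac_fun om) x.
Proof. by move=> x_cont; exact: Q_lim x_cont (in_dual_dirac om). Qed.

Lemma Q_dirac_phi x om : continuous x -> Q (dirac_fun (phi om)) x = Q (dirac_fun om) x.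
Proof.
move=> x_cont; have lim_erg := w_erg.2 x _ x_cont (in_dual_dirac om).
(* Ergodicity of {V_n} says that the orbit means at [om] and at [phi om] merge. *)
have lim_phi : orbit_mean phi (w n) x (phi om) @[n --> \oo] --> Q (dirac_fun om) x - 0.
  rewrite (_ : (fun n => _) = fun n => orbit_mean phi (w n) x om -
      (convop phi (w n) (dirac_fun om) x - Vpow phi 1 (convop phi (w n) (dirac_fun om)) x)).
    by apply: cvgB => //; exact: orbit_mean_cvg.
  by apply: funext => n; rewrite orbit_mean_phi convop_dirac subKr.
rewrite subr0 in lim_phi.
exact: (cvg_unique _ (@orbit_mean_cvg x (phi om) x_cont) lim_phi).
Qed.

Lemma Q_dirac_cst c om : Q (dirac_fun om) (cst c) = c.
Proof.
have lim_cst : orbit_mean phi (w n) (cst c) om @[n --> \oo] --> c.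
  rewrite (_ : (fun n => _) = fun=> c); first exact: cvg_cst.
  by apply: funext => n; rewrite (orbit_mean_cst phi (w_erg.1 n)).
exact: (cvg_unique _ (@orbit_mean_cvg (cst c) om (@cst_continuous _ _ c)) lim_cst).
Qed.

Lemma norm_Q_dirac_le x K om : continuous x -> (forall t, `|x t| <= K) ->
  `|Q (dirac_fun om) x| <= K.
Proof.
move=> x_cont x_le; have x_lim := @orbit_mean_cvg x om x_cont.
have mean_le n := norm_orbit_mean_le phi (w_erg.1 n) om x_le.
apply/ler_normlP; split; first rewrite lerNl.
- apply: (cvgr_to_ge x_lim); apply: nearW => n.
  by have /ler_normlP[] := mean_le n; rewrite lerNl.
- by apply: (cvgr_to_le x_lim); apply: nearW => n; have /ler_normlP[] := mean_le n.
Qed.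

Lemma measurable_Q_dirac x : continuous x ->
  measurable_fun [set: B] (fun om : B => Q (dirac_fun om) x).
Proof.
move=> x_cont.
apply: (@measurable_fun_cvg _ B R [set: B] (fun n => orbit_mean phi (w n) x)).
  by move=> n; apply: continuous_borel_measurable; exact: continuous_orbit_mean.
by move=> om _; exact: orbit_mean_cvg.
Qed.

Hypothesis T_compact : compact [set: T].
Variable mu : probability B R.
Hypothesis mu_phi : forall A : set B, measurable A -> mu (phi @^-1` A) = mu A.

Lemma Rintegral_orbit_mean n x : continuous x ->
  \int[mu]_om orbit_mean phi (w n) x om = \int[mu]_om x om.
Proof.
move=> x_cont; have phi_meas := continuous_borel_measurable_map phi_cont.
have x_iter_cont k : continuous (x \o iter k phi) := continuous_comp_iter phi_cont x_cont.
have int_iter k : \int[mu]_om x (iter k phi om) = \int[mu]_om x om.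
  apply: Rintegral_comp_preserving.
  - exact: measurable_iter.
  - by move=> A mA; exact: measure_preimage_iter.
  - exact: continuous_borel_measurable.
  - exact: (continuous_integrable T_compact _ (x_iter_cont k)).
rewrite Rintegral_sum //; last first.
  move=> k; apply: (continuous_integrable T_compact); apply: continuousMl.
  exact: x_iter_cont.
under eq_bigr => k _.
  rewrite RintegralZl ?int_iter //; last first.
    exact: (continuous_integrable T_compact _ (x_iter_cont k)).
  over.
by rewrite -big_distrl /= (w_erg.1 n).2 mul1r.
Qed.

Lemma Rintegral_Q_dirac x : continuous x ->
  \int[mu]_om Q (dirac_fun om) x = \int[mu]_om x om.
Proof.
move=> x_cont; have [K x_le] := compact_continuous_bounded T_compact x_cont.
have mean_int n : (\int[mu]_om (orbit_mean phi (w n) x om)%:E)%E = (\int[mu]_om x om)%:E.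
  rewrite -(Rintegral_orbit_mean n x_cont) /Rintegral fineK //.
  by apply: integrable_fin_num => //; apply: (continuous_integrable T_compact);
    exact: continuous_orbit_mean.
have mean_meas n : measurable_fun setT (fun om : B => (orbit_mean phi (w n) x om)%:E).
  apply: measurableT_comp => //; apply: continuous_borel_measurable.
  exact: continuous_orbit_mean.
have Q_meas : measurable_fun setT (fun om : B => (Q (dirac_fun om) x)%:E).
  by apply: measurableT_comp => //; exact: measurable_Q_dirac.
have mean_lim : {ae mu, forall om : B, setT om ->
    (orbit_mean phi (w n) x om)%:E @[n --> \oo] --> (Q (dirac_fun om) x)%:E}.
  by apply: aeW => om _; apply: cvg_EFin; [exact: nearW|exact: orbit_mean_cvg].
have mean_le : {ae mu, forall (om : B) n, setT om ->
    (`|(orbit_mean phi (w n) x om)%:E| <= K%:E)%E}.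
  apply: aeW => om n _ /=; rewrite lee_fin.
  exact: (norm_orbit_mean_le phi (w_erg.1 n)).
have [_ _] := dominated_convergence measurableT mean_meas Q_meas mean_lim
  (finite_measure_integrable_cst mu K measurableT) mean_le.
rewrite (_ : (fun n => _) = fun=> (\int[mu]_om x om)%:E); last exact: funext mean_int.
by move/(cvg_unique _ (cvg_cst _)); rewrite /Rintegral => <-.
Qed.

End limit_functional.

Theorem lemma4p1 (R : realType) (T : pseudoPMetricType R)
  (Hhaus : hausdorff_space T) (Hcpt : compact [set: T])
  (phi : T -> T) (Hphi : continuous phi)
  (w : nat -> seq R) (Q : ((T -> R) -> R) -> ((T -> R) -> R))
  (Herg : ergodic_seq phi w) (HQ : in_LXstar Q) (Hcvg : WstarO_cvg phi w Q)
  (mu : probability (borel T) R) (Hmu : phi_ergodic phi mu) :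
  exists om : T, forall x : T -> R, continuous x ->
    Q (dirac_fun om) x = Rintegral mu [set: borel T] x.
Proof.
have [g [g_cont g_det]] := countable_in_dual_determining Hcpt.
pose F n (om : borel T) := Q (dirac_fun om) (g n).
have F_ae n : mu.-negligible [set om | F n om != \int[mu]_t F n t].
  have F_meas := measurable_Q_dirac Hphi Hcvg (g_cont n).
  apply: (invariant_ae_mean Hmu.2 F_meas).
  - apply: bounded_integrable => //.
    have [K g_le] := compact_continuous_bounded Hcpt (g_cont n).
    by exists K => om; exact: (norm_Q_dirac_le Herg Hcvg om (g_cont n)).
  - by move=> om; exact: (Q_dirac_phi Herg Hcvg om (g_cont n)).
have [om om_good] := exists_notin_negligible (negligible_bigcup F_ae).
exists om; apply: g_det.
- exact: HQ.1 _ (in_dual_dirac om).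
- exact: in_dual_Rintegral.
- by move=> c; rewrite (Q_dirac_cst Herg Hcvg) Rintegral_cst_prob.
- move=> n; rewrite -(Rintegral_Q_dirac Hphi Herg Hcvg Hcpt Hmu.1 (g_cont n)).
  by apply/eqP/contraT => F_neq; case: om_good; exists n.
Qed.
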